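(* Consider the two-armed Gaussian bandit with two candidate models described in the context, under disagreement $\phi(\nu)=1$, $\phi(\gamma)=2$, with $\Delta_1<0<\Delta_2$, and let $\mu$ be the unique invariant probability measure on $(0,1)$ of the posterior process $\{\pi_t\}$. Then for every $\varepsilon\in(0,1/2)$, $\mu([\varepsilon,1-\varepsilon])>0$. In particular, in the stationary regime both actions are chosen with strictly positive long-run frequency, i.e. $\int\pi\,\mu(d\pi)\in(0,1)$.
   Context: Actions are $\mathcal A=\{1,2\}$. True environment: conditional on the past and on $A_t=i$, $R_t\sim\mathcal N(g(i),1)$. Two candidate models $\nu=(\nu_1,\nu_2)$, $\gamma=(\gamma_1,\gamma_2)\in\mathbb R^2$; under model $\theta$ the agent believes $R_t\mid A_t=i\sim\mathcal N(\theta_i,1)$ with density $f_\theta(r\mid i)$; $\phi(\theta)=\arg\max_i\theta_i$ (assumed unique). Thompson Sampling: prior $\pi_0\in(0,1)$ on $\nu$; at each date draw $\theta_t=\nu$ w.p. $\pi_t$, else $\gamma$; play $A_t=\phi(\theta_t)$ (so action 1 is played with probability $\pi_t$); observe $R_t$; Bayes update $\pi_{t+1}=\pi_t f_\nu(R_t\mid A_t)/(\pi_t f_\nu(R_t\mid A_t)+(1-\pi_t)f_\gamma(R_t\mid A_t))$. $\Delta_i:=\mathbb E_{R\sim\mathcal N(g(i),1)}[\log f_\nu(R\mid i)-\log f_\gamma(R\mid i)]$. In this regime the posterior process is a positive Harris recurrent Markov chain on $(0,1)$ with a unique invariant probability measure $\mu$. *)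

From HB Require Import structures.
From mathcomp Require Import all_boot all_order all_algebra.
From mathcomp Require Import all_classical all_reals all_analysis.
Set Implicit Arguments. Unset Strict Implicit. Unset Printing Implicit Defensive.
Import Order.TTheory GRing.Theory Num.Theory.
Local Open Scope classical_set_scope.
Local Open Scope ring_scope.

(* Actions A = {1,2} are encoded as booleans: [true] = action 1,
   [false] = action 2.  A model theta = (theta_1, theta_2) and the true
   mean-reward vector g = (g(1), g(2)) are pairs of reals. *)
Definition arm {R : realType} (th : R * R) (i : bool) : R :=
  if i then th.1 else th.2.

Definition fdens {R : realType} (th : R * R) (i : bool) (r : R) : R :=
  normal_pdf (arm th i) 1 r.

(* phi(theta) = argmax_i theta_i (assumed unique): true iff action 1. *)
Definition phi {R : realType} (th : R * R) : bool := th.2 < th.1.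

Definition bayes_update {R : realType} (nu gam : R * R) (p : R) (i : bool)
    (r : R) : R :=
  p * fdens nu i r / (p * fdens nu i r + (1 - p) * fdens gam i r).

(* Transition kernel of the posterior process {pi_t} under Thompson
   sampling: with probability p the sample is nu and action phi nu is
   played, otherwise gam is sampled and action phi gam is played; the
   reward is drawn from the true law N(g(A_t), 1). *)
Definition TS_kernel {R : realType} (g nu gam : R * R) (p : R) (A : set R)
    : \bar R :=
  (p%:E * normal_prob (arm g (phi nu)) 1 (bayes_update nu gam p (phi nu) @^-1` A)
   + (1 - p)%:E *
       normal_prob (arm g (phi gam)) 1 (bayes_update nu gam p (phi gam) @^-1` A))%E.

Definition TS_invariant {R : realType} (g nu gam : R * R)
    (mu : probability R R) : Prop :=
  mu `]0%R, 1%R[%classic = 1%E /\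
  forall A : set R, measurable A ->
    mu A = (\int[mu]_(p in `]0%R, 1%R[%classic) TS_kernel g nu gam p A)%E.

Definition Delta {R : realType} (g nu gam : R * R) (i : bool) : \bar R :=
  (\int[normal_prob (arm g i) 1]_r (ln (fdens nu i r) - ln (fdens gam i r))%:E)%E.

(* mu is carried by (0,1), so it charges some inner interval [a, 1 - a].
   From a prior p there, Thompson sampling samples nu with probability p >= a
   and plays phi(nu).  Since Delta_1 <> 0 the two models disagree on the mean
   of that arm, so the posterior log-odds are the prior log-odds plus a
   non-constant affine function of the reward.  Hence all rewards in a window
   of fixed width, centred at a point that stays bounded for p in [a, 1 - a],
   send the posterior into [eps, 1 - eps], and the Gaussian mass c of that
   window is bounded below uniformly in p.  Invariance gives
   mu [eps, 1 - eps] >= a c mu [a, 1 - a] > 0.  Finally p and 1 - p are both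
   positive on [eps, 1 - eps] and integrate to 1 together. *)

From HB Require Import structures.
From mathcomp Require Import all_boot all_order all_algebra.
From mathcomp Require Import all_classical all_reals all_analysis.
From mathcomp Require Import measurable_realfun ring lra.
Set Implicit Arguments. Unset Strict Implicit. Unset Printing Implicit Defensive.
Import Order.TTheory GRing.Theory Num.Theory.
Local Open Scope classical_set_scope.
Local Open Scope ring_scope.

Section log_odds.
Context {R : realType}.

Definition logit (p : R) : R := ln (p / (1 - p)).

Definition logistic (u : R) : R := expR u / (expR u + 1).

Lemma logit1B (p : R) : logit (1 - p) = ln ((1 - p) / p).
Proof. by rewrite /logit opprB subrKC. Qed.

Lemma abs_logit_le (a p : R) : 0 < a -> a <= p <= 1 - a -> `|logit p| <= logit (1 - a).
Proof.
move=> a0 /andP[ap pa].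
have a1 : 0 < 1 - a by lra.
have p0 : 0 < p by lra.
have p1 : 0 < 1 - p by lra.
rewrite logit1B /logit ler_norml -lnV ?posrE ?divr_gt0 // invf_div.
rewrite !ler_ln ?posrE ?divr_gt0 //.
rewrite ler_pdivrMr // mulrAC ler_pdivlMr // ler_pdivlMr // mulrAC ler_pdivrMr //.
by apply/andP; split; nra.
Qed.

Lemma logistic_bounds (eps u : R) : 0 < eps < 1 / 2 -> `|u| <= logit (1 - eps) ->
  eps <= logistic u <= 1 - eps.
Proof.
move=> /andP[e0 e1]; have e2 : 0 < 1 - eps by lra.
rewrite logit1B ler_norml => /andP[hlo hhi].
have E0 : 0 < expR u := expR_gt0 u.
have Elo : eps / (1 - eps) <= expR u.
  by rewrite -invf_div -[(1 - eps) / eps]lnK ?posrE ?divr_gt0 // -expRN ler_expR.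
have Ehi : expR u <= (1 - eps) / eps.
  by rewrite -[(1 - eps) / eps]lnK ?posrE ?divr_gt0 // ler_expR.
move: Elo Ehi; rewrite /logistic ler_pdivrMr // => Elo.
rewrite ler_pdivlMr // => Ehi.
by rewrite ler_pdivlMr ?ler_pdivrMr ?addr_gt0 //; apply/andP; split; nra.
Qed.

End log_odds.

Section bayes_rule.
Context {R : realType} (nu gam : R * R).

Definition llr (i : bool) (r : R) : R :=
  (arm nu i - arm gam i) * (r - (arm nu i + arm gam i) / 2).

Lemma fdens_gt0 (th : R * R) i r : 0 < fdens th i r.
Proof.
by rewrite /fdens normal_pdfE ?oner_neq0 // mulr_gt0 ?expR_gt0 ?normal_peak_gt0 ?oner_neq0.
Qed.

Lemma fdens_llr i r : fdens nu i r = fdens gam i r * expR (llr i r).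
Proof.
rewrite /fdens !normal_pdfE ?oner_neq0 // /normal_fun -mulrA -expRD /llr.
by congr (_ * expR _); rewrite expr1n; field.
Qed.

Lemma bayes_updateE (p : R) i r : 0 < p < 1 ->
  bayes_update nu gam p i r = logistic (logit p + llr i r).
Proof.
move=> /andP[p0 p1]; have p1' : 0 < 1 - p by lra.
rewrite /bayes_update /logistic /logit fdens_llr expRD lnK ?posrE ?divr_gt0 //.
have f0 := fdens_gt0 gam i r; have E0 := expR_gt0 (llr i r).
by field; rewrite !lt0r_neq0 // addr_gt0 ?mulr_gt0.
Qed.

(* The root of [r |-> logit p + llr i r]: the reward after which the posterior is 1/2. *)
Definition balanced_reward (p : R) i : R :=
  (arm nu i + arm gam i) / 2 - logit p / (arm nu i - arm gam i).

Lemma bayes_update_window (p eps d : R) i :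
  arm nu i != arm gam i -> 0 < p < 1 -> 0 < eps < 1 / 2 ->
  d * `|arm nu i - arm gam i| <= logit (1 - eps) ->
  `[balanced_reward p i - d, balanced_reward p i + d] `<=`
    bayes_update nu gam p i @^-1` `[eps, 1 - eps].
Proof.
move=> ab p01 eps01 hd r /=; rewrite in_itv /= -ler_distl => rx.
rewrite bayes_updateE // in_itv /=; apply: logistic_bounds => //.
have ab0 : arm nu i - arm gam i != 0 by rewrite subr_eq0.
have -> : logit p + llr i r = (arm nu i - arm gam i) * (r - balanced_reward p i).
  by rewrite /llr /balanced_reward; field.
by rewrite normrM mulrC (le_trans _ hd) // ler_wpM2r.
Qed.

End bayes_rule.

(* No measurability of [f] is needed: [c * \1_A] is a simple function below [f] on [D]. *)
Lemma cst_measure_le_integral d (T : measurableType d) (R : realType)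
    (mu : {measure set T -> \bar R}) (D A : set T) (f : T -> \bar R) (c : R) :
  measurable A -> A `<=` D -> 0 <= c ->
  (forall x, D x -> (0 <= f x)%E) -> (forall x, A x -> (c%:E <= f x)%E) ->
  (c%:E * mu A <= \int[mu]_(x in D) f x)%E.
Proof.
move=> mA AD c0 f0 fc; rewrite ge0_integralE //; apply: ereal_sup_ubound => /=.
exists (scale_nnsfun (indic_nnsfun R mA) c0).
  move=> x /=; rewrite /patch mindicE.
  case: ifPn => [/set_mem Dx|/negP Dx]; case: (boolP (x \in A)) => [/set_mem Ax|_].
  - by rewrite mulr1 fc.
  - by rewrite mulr0 f0.
  - by exfalso; apply/Dx/mem_set/AD.
  - by rewrite mulr0.
rewrite sintegralrM /= -(sintegral_indic mu A).
by congr (_ * sintegral _ _)%E; apply/funext => x; rewrite indicE.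
Qed.

Lemma normal_prob_ge_window (R : realType) (m s x X d : R) (D : set R) :
  s != 0 -> `|x - m| <= X -> 0 < d -> `[x - d, x + d] `<=` D ->
  ((normal_peak s * expR (- (X + d) ^+ 2 / (s ^+ 2 *+ 2)) * (d *+ 2))%:E
    <= normal_prob m s D)%E.
Proof.
move=> s0 xm d0 xD.
have leb : lebesgue_measure `[x - d, x + d] = (d *+ 2)%:E.
  rewrite lebesgue_measure_itv /= lte_fin ifT; last lra.
  by rewrite -EFinD; congr EFin; lra.
rewrite EFinM -leb; apply: cst_measure_le_integral => //.
- by rewrite mulr_ge0 ?normal_peak_ge0 ?expR_ge0.
- by move=> r _; rewrite lee_fin normal_pdf_ge0.
move=> r /=; rewrite in_itv /= -ler_distl => rx.
have rm : `|r - m| <= X + d.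
  by rewrite -(subrKA x) (le_trans (ler_normD _ _)) // addrC lerD.
rewrite lee_fin normal_pdfE // ler_pM2l ?normal_peak_gt0 // ler_expR !mulNr lerN2.
rewrite ler_wpM2r ?invr_ge0 ?mulrn_wge0 ?sqr_ge0 //.
by move: rm; rewrite ler_norml => /andP[? ?]; nra.
Qed.

Lemma bayes_update_itv_prob_lb (R : realType) (nu gam : R * R) (m eps a : R) i :
  arm nu i != arm gam i -> 0 < eps < 1 / 2 -> 0 < a ->
  exists2 c : R, 0 < c & forall p, a <= p <= 1 - a ->
    (c%:E <= normal_prob m 1 (bayes_update nu gam p i @^-1` `[eps, (1 - eps)%R]))%E.
Proof.
move=> ab eps01 a0; have [e0 e1] := andP eps01.
have ab0 : 0 < `|arm nu i - arm gam i| by rewrite normr_gt0 subr_eq0.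
set d := logit (1 - eps) / `|arm nu i - arm gam i|.
have d0 : 0 < d.
  by rewrite divr_gt0 // logit1B ln_gt0 // ltr_pdivlMr //; lra.
set X := `|(arm nu i + arm gam i) / 2 - m| + logit (1 - a) / `|arm nu i - arm gam i|.
exists (normal_peak 1 * expR (- (X + d) ^+ 2 / (1 ^+ 2 *+ 2)) * (d *+ 2)).
  by rewrite !mulr_gt0 ?expR_gt0 ?normal_peak_gt0 ?oner_neq0 ?mulrn_wgt0.
move=> p pa; have p01 : 0 < p < 1 by case/andP: pa => ? ?; apply/andP; split; lra.
apply: (normal_prob_ge_window (oner_neq0 _) _ d0 (bayes_update_window _ _ _ _)) => //.
- rewrite /balanced_reward addrAC (le_trans (ler_normB _ _)) // lerD2l normf_div.
  by rewrite ler_pM2r ?invr_gt0 // abs_logit_le.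
- by rewrite /d divfK ?lt0r_neq0.
Qed.

Lemma measure_inner_itv_gt0 (R : realType) (mu : {measure set R -> \bar R}) :
  (0 < mu `]0%R, 1%R[%classic)%E -> exists2 a : R, 0 < a & (0 < mu `[a, (1 - a)%R]%classic)%E.
Proof.
move=> mu01; have [//|none] := pselect (exists2 a : R, 0 < a & (0 < mu `[a, (1 - a)%R]%classic)%E).
pose F n : set R := `[n.+1%:R^-1, 1 - n.+1%:R^-1]%classic.
have Fnull n : mu.-negligible (F n).
  exists (F n); split => //; first exact: measurable_itv.
  apply/eqP; rewrite eq_le measure_ge0 andbT leNgt; apply/negP => Fpos.
  by apply: none; exists n.+1%:R^-1; rewrite ?invr_gt0.
have [B [mB B0 FB]] := negligible_bigcup Fnull.
suff sub : `]0, 1[%classic `<=` B.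
  have := le_measure mu (mem_set (measurable_itv _)) (mem_set mB) sub.
  by move/(lt_le_trans mu01); move: B0 => /= ->; rewrite ltxx.
move=> p /=; rewrite in_itv /= => /andP[p0 p1]; apply: FB.
have y0 : 0 < Num.min p (1 - p) by rewrite lt_min p0 subr_gt0.
exists (Num.truncn (Num.min p (1 - p))^-1) => //=.
have := truncnS_gt (Num.min p (1 - p))^-1.
rewrite -ltf_pV2 ?posrE ?invr_gt0 // invrK lt_min => /andP[np n1p].
by rewrite /F /= in_itv /= ltW // lerBrDl -lerBrDr ltW.
Qed.

Lemma integral_itv01_id_gt0_lt1 (R : realType) (mu : {measure set R -> \bar R}) (eps : R) :
  mu `]0%R, 1%R[%classic = 1%E -> 0 < eps -> (0 < mu `[eps, (1 - eps)%R]%classic)%E ->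
  (0 < \int[mu]_(p in `]0%R, 1%R[%classic) p%:E)%E /\
  (\int[mu]_(p in `]0%R, 1%R[%classic) p%:E < 1)%E.
Proof.
move=> mu01 eps0 mueps.
have sub : `[eps, 1 - eps]%classic `<=` `]0, 1[%classic.
  by move=> p /=; rewrite !in_itv /= => /andP[? ?]; apply/andP; split; lra.
have pos f : (forall p, 0 < p < 1 -> 0 <= f p) -> (forall p, eps <= p <= 1 - eps -> eps <= f p) ->
    (0 < \int[mu]_(p in `]0%R, 1%R[%classic) (f p)%:E)%E.
  move=> f0 feps; apply: (@lt_le_trans _ _ (eps%:E * mu `[eps, (1 - eps)%R]%classic)%E).
    by rewrite mule_gt0 // lte_fin.
  apply: cst_measure_le_integral; [exact: measurable_itv|exact: sub|exact: ltW|..].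
  - by move=> p /=; rewrite in_itv /= lee_fin => /f0.
  - by move=> p /=; rewrite in_itv /= lee_fin => /feps.
set Ip := (\int[mu]_(p in _) p%:E)%E.
pose Iq := (\int[mu]_(p in `]0%R, 1%R[%classic) (1 - p)%:E)%E.
have Ip_gt0 : (0 < Ip)%E by apply: pos => p /andP[? ?]; lra.
have Iq_gt0 : (0 < Iq)%E by apply: pos => p /andP[? ?]; lra.
have sum1 : (Ip + Iq = 1)%E.
  rewrite -ge0_integralD //; first last.
  - exact/measurable_EFinP/measurable_funB.
  - by move=> p /=; rewrite in_itv /= lee_fin subr_ge0 => /andP[_ /ltW].
  - by move=> p /=; rewrite in_itv /= lee_fin => /andP[/ltW].
  under eq_integral do rewrite -EFinD subrKC.
  by rewrite integral_cst // mul1e.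
have Ip_fin : Ip \is a fin_num by move: (fin_numD Ip Iq); rewrite sum1 => /esym/andP[].
by split=> //; rewrite -sum1 lteDl.
Qed.

Section thompson_sampling.
Context {R : realType} (g nu gam : R * R).

Lemma Delta_eq0 i : arm nu i = arm gam i -> Delta g nu gam i = 0%E.
Proof.
move=> same; rewrite /Delta /fdens same.
by under eq_integral do rewrite subrr; rewrite integral0.
Qed.

Lemma TS_kernel_ge0 p A : 0 <= p -> p <= 1 -> (0 <= TS_kernel g nu gam p A)%E.
Proof.
by move=> p0 p1; rewrite adde_ge0 // mule_ge0 ?lee_fin ?subr_ge0 // measure_ge0.
Qed.

Lemma TS_kernel_ge_sample_nu p A : 0 <= p -> p <= 1 ->
  (p%:E * normal_prob (arm g (phi nu)) 1 (bayes_update nu gam p (phi nu) @^-1` A)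
    <= TS_kernel g nu gam p A)%E.
Proof.
by move=> p0 p1; rewrite leeDl // mule_ge0 ?lee_fin ?subr_ge0 // measure_ge0.
Qed.

Lemma TS_invariant_itv_gt0 (mu : probability R R) eps :
  arm nu (phi nu) != arm gam (phi nu) -> TS_invariant g nu gam mu -> 0 < eps < 1 / 2 ->
  (0 < mu `[eps, (1 - eps)%R]%classic)%E.
Proof.
move=> ab [mu01 inv] eps01.
have [a a0 mua] : exists2 a : R, 0 < a & (0 < mu `[a, (1 - a)%R]%classic)%E.
  by apply: measure_inner_itv_gt0; move: mu01 => /= ->.
have [c c0 reach] := bayes_update_itv_prob_lb (arm g (phi nu)) ab eps01 a0.
have inner p : `[a, 1 - a]%classic p -> [/\ a <= p <= 1 - a, 0 < p & p < 1].
  by rewrite /= in_itv /= => /[dup] apa /andP[? ?]; split => //; lra.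
rewrite inv; last exact: measurable_itv.
apply: (@lt_le_trans _ _ ((a * c)%:E * mu `[a, (1 - a)%R]%classic)%E).
  by rewrite mule_gt0 // lte_fin mulr_gt0.
apply: cst_measure_le_integral.
- exact: measurable_itv.
- by move=> p /inner[_ p0 p1]; rewrite /= in_itv /= p0 p1.
- by rewrite mulr_ge0 ?ltW.
- by move=> p; rewrite /= in_itv /= => /andP[p0 p1]; rewrite TS_kernel_ge0 ?ltW.
move=> p /inner[apa p0 p1]; apply: le_trans (TS_kernel_ge_sample_nu _ (ltW p0) (ltW p1)).
by rewrite EFinM lee_pmul ?lee_fin ?(ltW a0) ?(ltW c0) ?reach //; case/andP: apa.
Qed.

End thompson_sampling.

Theorem corollary2 (R : realType) (g nu gam : R * R) (mu : probability R R) :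
  (* disagreement: phi(nu) = 1, phi(gam) = 2 *)
  nu.2 < nu.1 -> gam.1 < gam.2 ->
  (* Delta_1 < 0 < Delta_2 *)
  (Delta g nu gam true < 0)%E -> (0 < Delta g nu gam false)%E ->
  (* mu is the unique invariant probability measure on (0,1) *)
  TS_invariant g nu gam mu ->
  (forall mu' : probability R R, TS_invariant g nu gam mu' ->
     forall A : set R, measurable A -> mu' A = mu A) ->
  (forall eps : R, 0 < eps -> eps < 1 / 2 -> (0 < mu `[eps, (1 - eps)%R]%classic)%E) /\
  (0 < \int[mu]_(p in `]0%R, 1%R[%classic) p%:E)%E /\ (\int[mu]_(p in `]0%R, 1%R[%classic) p%:E < 1)%E.
Proof.
move=> nu_plays1 _ Delta1_lt0 _ inv _.
have disagree : arm nu (phi nu) != arm gam (phi nu).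
  rewrite /phi nu_plays1; apply/eqP => same.
  by move: Delta1_lt0; rewrite Delta_eq0 // ltxx.
have itv_gt0 eps : 0 < eps -> eps < 1 / 2 -> (0 < mu `[eps, (1 - eps)%R]%classic)%E.
  by move=> e0 e1; apply: TS_invariant_itv_gt0 disagree inv _; rewrite e0 e1.
split=> //; apply: (integral_itv01_id_gt0_lt1 inv.1 (eps := 1 / 4)); first lra.
by apply: itv_gt0; lra.
Qed.
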